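(* Let $n\ge 3$ and let $P_n(x)=x^n+a_{n-2}x^{n-2}+\cdots+a_1x+a_0$ be a real monic polynomial whose coefficient of $x^{n-1}$ is zero. For $2\le i\le n$ let $P_i=\frac{i!}{n!}P_n^{(n-i)}$, so that $P_{i-1}=\frac1iP_i'$ for $3\le i\le n$, each $P_i$ is monic of degree $i$ with zero coefficient of $x^{i-1}$, and the constant term of $P_i$ is $b_i=\frac{i!\,(n-i)!}{n!}\,a_{n-i}$. For $3\le i\le n$ define $R_{i-2}$ by $P_i(x)=xP_{i-1}(x)-R_{i-2}(x)$ and put $R^0_{i-2}=R_{i-2}+b_i$ (a polynomial not depending on $b_i$). Then $P_n$ has $n$ distinct real roots if and only if $a_{n-2}<0$ and, for every $i\in\{3,\dots,n\}$ (where, inductively, $P_{i-1}$ has $i-1$ distinct real roots $\alpha^{(i-1)}_1<\cdots<\alpha^{(i-1)}_{i-1}$): - if $i$ is even, $$\max_{k\in\{1,\dots,\frac{i-2}{2}\}}R^0_{i-2}\big(\alpha^{(i-1)}_{2k}\big)<b_i<\min_{k\in\{0,\dots,\frac{i-2}{2}\}}R^0_{i-2}\big(\alpha^{(i-1)}_{2k+1}\big);$$ - if $i$ is odd, $$\max_{k\in\{0,\dots,\frac{i-3}{2}\}}R^0_{i-2}\big(\alpha^{(i-1)}_{2k+1}\big)<b_i<\min_{k\in\{1,\dots,\frac{i-1}{2}\}}R^0_{i-2}\big(\alpha^{(i-1)}_{2k}\big).$$ (In particular each of these open intervals is nonempty.)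
   Context: $P_n^{(m)}$ denotes the $m$-th derivative. The condition $a_{n-2}<0$ is equivalent to $P_2(x)=x^2+\frac{2(n-2)!}{n!}a_{n-2}$ having two distinct real roots. $R_{i-2}(x)=xP_{i-1}(x)-P_i(x)$ has constant term $-b_i$, and $R^0_{i-2}$ is $R_{i-2}$ with its constant term removed. *)

From HB Require Import structures.
From mathcomp Require Import all_boot all_order all_algebra.
Set Implicit Arguments. Unset Strict Implicit. Unset Printing Implicit Defensive.
Import Order.TTheory GRing.Theory Num.Theory.
Local Open Scope ring_scope.

Section Defs.
Variable R : rcfType.

Definition Pi (n : nat) (p : {poly R}) (i : nat) : {poly R} :=
  ((i`!)%:R / (n`!)%:R) *: p^`(n - i).

Definition bi (n : nat) (p : {poly R}) (i : nat) : R :=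
  ((i`! * (n - i)`!)%N%:R / (n`!)%:R) * p`_(n - i).

(* R_{i-2} defined by P_i = x P_{i-1} - R_{i-2}  (indexed here by i) *)
Definition Rm2 (n : nat) (p : {poly R}) (i : nat) : {poly R} :=
  'X * Pi n p i.-1 - Pi n p i.

Definition R0m2 (n : nat) (p : {poly R}) (i : nat) : {poly R} :=
  Rm2 n p i + (bi n p i)%:P.

(* The interlacing condition at step i, where s = [:: alpha_1; ...; alpha_{i-1}]
   (0-indexed: alpha_m = s`_(m-1)). Max/min over the (nonempty) index ranges are
   written out as pointwise inequalities. *)
Definition step_cond (n : nat) (p : {poly R}) (i : nat) (s : seq R) : Prop :=
  if odd i then
    (forall k : nat, (k <= (i - 3) %/ 2)%N -> (R0m2 n p i).[s`_(2 * k)] < bi n p i) /\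
    (forall k : nat, (1 <= k <= (i - 1) %/ 2)%N -> bi n p i < (R0m2 n p i).[s`_(2 * k - 1)])
  else
    (forall k : nat, (1 <= k <= (i - 2) %/ 2)%N -> (R0m2 n p i).[s`_(2 * k - 1)] < bi n p i) /\
    (forall k : nat, (k <= (i - 2) %/ 2)%N -> bi n p i < (R0m2 n p i).[s`_(2 * k)]).

End Defs.

From HB Require Import structures.
From mathcomp Require Import all_boot all_order all_algebra.
From mathcomp Require Import polyrcf.
From mathcomp Require Import zify ring lra.
Set Implicit Arguments. Unset Strict Implicit. Unset Printing Implicit Defensive.
Import Order.TTheory GRing.Theory Num.Theory.
Local Open Scope ring_scope.

(* By Rolle's theorem, when P_i has i simple roots, P_(i-1) = P_i' / i has i - 1
   simple roots strictly interlacing them, and P_i alternates in sign on these.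
   At a root a of P_(i-1) we have R^0_(i-2)(a) - b_i = - P_i(a), so the bounds on
   b_i at step i say exactly that P_i alternates in sign on the roots of P_(i-1).
   Conversely, for i = n this alternation, together with the signs of the monic
   P_n at -oo and +oo, gives n sign changes of P_n.  The condition a_(n-2) < 0 is
   the case i = 2: P_1 = x, so P_2(0) < 0. *)

Lemma exists_seq_nth (T : Type) (x0 : T) (P : nat -> T -> Prop) m :
  (forall j, (j < m)%N -> exists x, P j x) ->
  exists t, size t = m /\ forall j, (j < m)%N -> P j (nth x0 t j).
Proof.
elim: m => [|m IH] hP; first by exists [::].
have [t [st Ht]] := IH (fun j hj => hP j (ltnW hj)).
have [x Px] := hP m (ltnSn m).
exists (rcons t x); split=> [|j hj]; first by rewrite size_rcons st.
rewrite nth_rcons st; case: ltnP => hjm; first exact: Ht.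
by rewrite (_ : j = m) ?eqxx //; lia.
Qed.

Section Interlacing.
Variable R : rcfType.
Implicit Types (q : {poly R}) (r s : seq R).

Definition interlaced r s := forall j, (j < size s)%N -> r`_j < s`_j < r`_j.+1.

(* [(-1) ^+ (size s - j)] is the sign at [s`_j] of a monic polynomial whose
   size s + 1 simple roots interlace s: size s - j of them lie right of [s`_j]. *)
Definition alternates q s :=
  forall j, (j < size s)%N -> 0 < (-1) ^+ (size s - j) * q.[s`_j].

Lemma interlaced_sortedr r s : interlaced r s -> sorted <%R s.
Proof.
move=> hrs; apply/(sortedP 0) => j hj.
have /andP[_ h1] := hrs j (ltnW hj); have /andP[h2 _] := hrs j.+1 hj.
exact: lt_trans h1 h2.
Qed.

Lemma interlaced_sortedl r s : size r = (size s).+1 -> interlaced r s -> sorted <%R r.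
Proof.
move=> sr hrs; apply/(sortedP 0) => j; rewrite sr ltnS => hj.
by have /andP[h1 h2] := hrs j hj; apply: lt_trans h1 h2.
Qed.

Lemma prod_subr_gt0 (a : R) (l : seq R) :
  all (fun x => x < a) l -> 0 < \prod_(x <- l) (a - x).
Proof.
elim: l => [|x l IH] /=; first by rewrite big_nil ltr01.
by case/andP=> hx hl; rewrite big_cons mulr_gt0 ?IH // subr_gt0.
Qed.

Lemma sign_prod_subr_gt0 (a : R) (l : seq R) :
  all (fun x => a < x) l -> 0 < (-1) ^+ (size l) * \prod_(x <- l) (a - x).
Proof.
elim: l => [|x l IH] /=; first by rewrite big_nil mulr1 ltr01.
case/andP=> hx hl; rewrite big_cons exprS.
have -> : -1 * (-1) ^+ size l * ((a - x) * \prod_(y <- l) (a - y)) =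
          (x - a) * ((-1) ^+ size l * \prod_(y <- l) (a - y)) by ring.
by rewrite mulr_gt0 ?IH // subr_gt0.
Qed.

Lemma sorted_lt_nth r i j : sorted <%R r -> (i < j < size r)%N -> r`_i < r`_j.
Proof.
move=> hs /andP[hij hj]; apply: (sorted_ltn_nth lt_trans) => //; rewrite inE /=; lia.
Qed.

Lemma sorted_le_nth r i j : sorted <%R r -> (i <= j < size r)%N -> r`_i <= r`_j.
Proof.
move=> hs /andP[]; rewrite leq_eqVlt => /orP[/eqP -> // | hij] hj.
by apply/ltW/sorted_lt_nth => //; rewrite hij.
Qed.

Lemma monic_sign_between_roots q r j x :
  q \is monic -> size q = (size r).+1 -> sorted <%R r -> all (root q) r ->
  (j.+1 < size r)%N -> r`_j < x < r`_j.+1 ->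
  0 < (-1) ^+ (size r - j.+1) * q.[x].
Proof.
move=> mq sq hs hr hj /andP[hlo hhi].
have qE : q = \prod_(z <- r) ('X - z%:P).
  rewrite {1}(all_roots_prod_XsubC sq hr) ?uniq_rootsE ?lt_sorted_uniq //.
  by rewrite (monicP mq) scale1r.
rewrite qE horner_prod; under eq_bigr do rewrite hornerXsubC.
rewrite -(cat_take_drop j.+1 r) big_cat /=.
have hleft : 0 < \prod_(z <- take j.+1 r) (x - z).
  apply: prod_subr_gt0; apply/(all_nthP 0) => k; rewrite size_take_min => hk.
  rewrite nth_take; last by lia.
  by apply: le_lt_trans hlo; apply: sorted_le_nth => //; lia.
have hright : 0 < (-1) ^+ (size r - j.+1) * \prod_(z <- drop j.+1 r) (x - z).
  rewrite -size_drop; apply: sign_prod_subr_gt0.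
  apply/(all_nthP 0) => k; rewrite size_drop => hk; rewrite nth_drop.
  have {}hk : (k < size r - j.+1)%N := hk.
  by apply: lt_le_trans hhi _; apply: sorted_le_nth => //; lia.
by rewrite cat_take_drop mulrCA mulr_gt0.
Qed.

Lemma rolle_interlaced q r : sorted <%R r -> all (root q) r ->
  exists s, [/\ size s = (size r).-1, all (root q^`()) s & interlaced r s].
Proof.
move=> hs hr.
case: (@exists_seq_nth _ 0 (fun j x => r`_j < x < r`_j.+1 /\ root q^`() x)
                        (size r).-1) => [j hj | s [ss Hs]].
  have hlt : r`_j < r`_j.+1 by apply: sorted_lt_nth => //; lia.
  have root_r k : (k < size r)%N -> q.[r`_k] = 0.
    by move=> hk; apply/eqP/(all_nthP 0 hr).
  have [c hc dc] := poly_rolle hlt (etrans (root_r j (ltac:(lia)))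
                                          (esym (root_r j.+1 (ltac:(lia))))).
  by exists c; move: hc; rewrite in_itv /root dc eqxx => ->.
exists s; split=> //; last by move=> j; rewrite ss => /Hs[].
by apply/(all_nthP 0) => j; rewrite ss => /Hs[].
Qed.

Lemma sign_change_root q m a b : a < b ->
  0 < (-1) ^+ m.+1 * q.[a] -> 0 < (-1) ^+ m * q.[b] ->
  exists2 x, a < x < b & root q x.
Proof.
move=> hab; rewrite exprS mulN1r mulNr -signr_odd !mulr_sign => ha hb.
have qab : q.[a] * q.[b] < 0 by case: (odd m) ha hb => ha hb; nra.
by have [x] := poly_ivtoo (ltW hab) qab; rewrite in_itv; exists x.
Qed.

Lemma monic_pos_right q a : q \is monic -> exists2 b, a < b & 0 < q.[b].
Proof.
move=> /monicP mq.
have [M HM] : exists M, forall x, M <= x -> 1 <= q.[x].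
  by rewrite -mq; apply: poly_pinfty_gt_lc; rewrite mq ltr01.
exists (`|M| + `|a| + 1); first by have := ler_norm a; have := normr_ge0 M; lra.
apply: lt_le_trans ltr01 (HM _ _).
by have := ler_norm M; have := normr_ge0 a; lra.
Qed.

Lemma monic_sign_left q m a : q \is monic -> size q = m.+1 ->
  exists2 b, b < a & 0 < (-1) ^+ m * q.[b].
Proof.
move=> mq sq.
have mqN : (-1) ^+ m *: (q \Po - 'X) \is monic.
  apply/monicP; rewrite lead_coefZ lead_coef_comp ?size_polyN ?size_polyX //.
  rewrite lead_coefN lead_coefX (monicP mq) sq /= mul1r -exprD.
  by rewrite -signr_odd addnn odd_double expr0.
have [b hb qb] := monic_pos_right (- a) mqN.
exists (- b); first lra.
by move: qb; rewrite hornerZ horner_comp hornerN hornerX.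
Qed.

Lemma alternates_roots q s : q \is monic -> size q = (size s).+2 ->
  sorted <%R s -> alternates q s ->
  exists r, [/\ size r = (size s).+1, all (root q) r & interlaced r s].
Proof.
move=> mq sq hs alt.
have [s0 | s_ne] := eqVneq s [::].
  have [x rx] : {x | root q x} by apply: odd_poly_root; rewrite sq s0.
  by exists [:: x]; rewrite s0 /= rx; split.
have s_gt0 : (0 < size s)%N by rewrite lt0n size_eq0.
have s_lt k : (k.+1 < size s)%N -> s`_k < s`_k.+1.
  by move=> hk; apply: sorted_lt_nth => //; lia.
case: (@exists_seq_nth _ 0 (fun j x =>
  [/\ root q x, (0 < j)%N -> s`_j.-1 < x & (j < size s)%N -> x < s`_j]) (size s).+1)
  => [j hj | r [sr Hr]].
  case: (posnP j) => [-> | j_gt0].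
    have alt_head : 0 < (-1) ^+ size s * q.[s`_0].
      by rewrite -[size s]subn0; apply: alt.
    have [a ha qa] := monic_sign_left (s`_0) mq sq.
    have [x /andP[_ hx] rx] := sign_change_root ha qa alt_head.
    by exists x.
  have alt_pred : 0 < (-1) ^+ (size s - j).+1 * q.[s`_j.-1].
    by rewrite (_ : (size s - j).+1 = size s - j.-1)%N; [apply: alt|]; lia.
  case: (ltnP j (size s)) => hjs.
    have hlt : s`_j.-1 < s`_j by rewrite -{2}(prednK j_gt0); apply: s_lt; lia.
    have [x /andP[h1 h2] rx] := sign_change_root hlt alt_pred (alt j hjs).
    by exists x.
  rewrite (_ : size s - j = 0)%N in alt_pred; last by lia.
  have [b hb qb] := monic_pos_right (s`_j.-1) mq.
  have qb' : 0 < (-1) ^+ 0 * q.[b] by rewrite expr0 mul1r.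
  have [x /andP[h1 _] rx] := sign_change_root hb alt_pred qb'.
  by exists x; split=> // ?; lia.
exists r; split=> //.
  by apply/(all_nthP 0) => j; rewrite sr => /Hr[].
move=> j hj; have [_ _ -> //] := Hr j (ltnW hj); have [_ h _] := Hr j.+1 hj.
exact: h.
Qed.

End Interlacing.

Lemma reindex_by_parity (P Q : nat -> Prop) i : (1 < i)%N ->
  (if odd i then
     (forall k, (k <= (i - 3) %/ 2)%N -> P (2 * k)%N) /\
     (forall k, (1 <= k <= (i - 1) %/ 2)%N -> Q (2 * k - 1)%N)
   else
     (forall k, (1 <= k <= (i - 2) %/ 2)%N -> P (2 * k - 1)%N) /\
     (forall k, (k <= (i - 2) %/ 2)%N -> Q (2 * k)%N)) <->
  (forall j, (j < i.-1)%N -> ~~ odd (i.-1 - j) -> P j) /\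
  (forall j, (j < i.-1)%N -> odd (i.-1 - j) -> Q j).
Proof.
move=> hi; case: ifP => oi; split=> -[H1 H2]; split=> j hj.
- by move=> hpar; rewrite (_ : j = 2 * j./2)%N; [apply: H1 | ]; lia.
- by move=> hpar; rewrite (_ : j = 2 * j./2.+1 - 1)%N; [apply: H2 | ]; lia.
- by apply: H1; lia.
- by apply: H2; lia.
- by move=> hpar; rewrite (_ : j = 2 * j./2.+1 - 1)%N; [apply: H1 | ]; lia.
- by move=> hpar; rewrite (_ : j = 2 * j./2)%N; [apply: H2 | ]; lia.
- by apply: H1; lia.
- by apply: H2; lia.
Qed.

Section NormalizedDerivatives.
Variables (R : rcfType) (n : nat) (p : {poly R}).
Hypotheses (size_p : size p = n.+1) (monic_p : p \is monic).

Lemma coef_Pi i k : (Pi n p i)`_k =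
  (i`!%:R / n`!%:R) * (p`_(n - i + k) *+ (n - i + k) ^_ (n - i)).
Proof. by rewrite /Pi coefZ coef_derivn. Qed.

Lemma coef_Pi_gt i k : (i <= n)%N -> (i < k)%N -> (Pi n p i)`_k = 0.
Proof.
by move=> hi hk; rewrite coef_Pi nth_default ?mul0rn ?mulr0 // size_p; lia.
Qed.

Lemma coef_Pi_lead i : (i <= n)%N -> (Pi n p i)`_i = 1.
Proof.
move=> hi; rewrite coef_Pi (_ : n - i + i = n)%N; last by lia.
have -> : p`_n = 1 by move/monicP: monic_p; rewrite /lead_coef size_p.
have := ffact_fact (leq_subr i n); rewrite (_ : n - (n - i) = i)%N; last by lia.
move=> <-; rewrite natrM; field.
by rewrite !pnatr_eq0 -!lt0n fact_gt0 ffact_gt0 leq_subr.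
Qed.

Lemma size_Pi i : (i <= n)%N -> size (Pi n p i) = i.+1.
Proof.
move=> hi; apply/eqP; rewrite eqn_leq; apply/andP; split.
  by apply/leq_sizeP => j hj; apply: coef_Pi_gt.
rewrite ltnNge; apply/negP => /(nth_default 0).
by rewrite coef_Pi_lead // => /eqP; rewrite oner_eq0.
Qed.

Lemma monic_Pi i : (i <= n)%N -> Pi n p i \is monic.
Proof. by move=> hi; apply/monicP; rewrite /lead_coef size_Pi //= coef_Pi_lead. Qed.

Lemma Pi_n : Pi n p n = p.
Proof. by rewrite /Pi subnn derivn0 divff ?scale1r // pnatr_eq0 -lt0n fact_gt0. Qed.

Lemma deriv_Pi i : (0 < i <= n)%N -> (Pi n p i)^`() = i%:R *: Pi n p i.-1.
Proof.
case: i => // i /andP[_ hi]; rewrite /Pi derivZ -derivnS scalerA.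
rewrite (_ : n - i.+1.-1 = (n - i.+1).+1)%N; last by lia.
by congr (_ *: _); rewrite factS natrM /=; field; rewrite pnatr_eq0 -lt0n fact_gt0.
Qed.

Lemma root_deriv_Pi i x :
  (0 < i <= n)%N -> root (Pi n p i)^`() x = root (Pi n p i.-1) x.
Proof.
move=> hi; rewrite deriv_Pi // rootZ // pnatr_eq0; case/andP: hi; lia.
Qed.

Lemma Pi_1 : (0 < n)%N -> p`_n.-1 = 0 -> Pi n p 1 = 'X.
Proof.
move=> n_gt0 p_sublead; apply/polyP => -[|[|k]]; rewrite coefX.
- by rewrite coef_Pi addn0 (_ : n - 1 = n.-1)%N ?p_sublead ?mul0rn ?mulr0 //; lia.
- by rewrite coef_Pi_lead //; lia.
- by rewrite coef_Pi_gt //; lia.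
Qed.

Lemma coef_lt0_Pi2 : (Pi n p 2).[0] < 0 -> p`_(n - 2) < 0.
Proof.
rewrite horner_coef0 coef_Pi addn0.
have hc : 0 < (2`!%:R / n`!%:R : R) by rewrite divr_gt0 // ltr0n fact_gt0.
have hf : (0 < (n - 2) ^_ (n - 2))%N by rewrite ffact_gt0.
by rewrite pmulr_rlt0 // pmulrn_llt0.
Qed.

Lemma Pi_interlacing i r : (0 < i <= n)%N ->
  sorted <%R r -> size r = i -> all (root (Pi n p i)) r ->
  exists s, [/\ sorted <%R s, size s = i.-1, all (root (Pi n p i.-1)) s
               & alternates (Pi n p i) s].
Proof.
move=> hi hs sr hr; have hin : (i <= n)%N by case/andP: hi.
have [s [ss ds hrs]] := rolle_interlaced hs hr.
exists s; split.
- exact: interlaced_sortedr hrs.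
- by rewrite ss sr.
- by apply/allP => x /(allP ds); rewrite root_deriv_Pi.
- move=> j hj; rewrite (_ : size s - j = size r - j.+1)%N; last first.
    by move: hj; rewrite ss sr; lia.
  apply: monic_sign_between_roots => //; first exact: monic_Pi.
  + by rewrite size_Pi ?sr.
  + by rewrite ss in hj; lia.
  + exact: hrs.
Qed.

Lemma Pi_sorted_roots : (exists s, [/\ uniq s, size s = n & all (root p) s]) ->
  forall i, (i <= n)%N ->
  exists r, [/\ sorted <%R r, size r = i & all (root (Pi n p i)) r].
Proof.
case=> s0 [us ss rs] i hi; rewrite -(subKn hi).
elim: (n - i)%N (leq_subr i n) => [|k IH] hk.
  exists (sort <=%R s0); rewrite subn0 Pi_n size_sort sort_lt_sorted; split=> //.
  by apply/allP => x; rewrite mem_sort; apply: (allP rs).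
have [r [sr szr rr]] := IH (ltnW hk).
have hnk : (0 < n - k <= n)%N by lia.
have [s [hs ss' rts _]] := Pi_interlacing hnk sr szr rr.
by exists s; rewrite (_ : n - k.+1 = (n - k).-1)%N; [split | lia].
Qed.

Lemma Pi_alternating_roots : (exists s, [/\ uniq s, size s = n & all (root p) s]) ->
  forall i, (0 < i <= n)%N ->
  exists s, [/\ sorted <%R s, size s = i.-1, all (root (Pi n p i.-1)) s
               & alternates (Pi n p i) s].
Proof.
move=> hroots i hi; have [_ hin] := andP hi.
have [r [hs sr hr]] := Pi_sorted_roots hroots hin.
exact: Pi_interlacing hi hs sr hr.
Qed.

Lemma step_condE i s :
  (1 < i)%N -> size s = i.-1 -> all (root (Pi n p i.-1)) s ->
  step_cond n p i s <-> alternates (Pi n p i) s.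
Proof.
move=> hi ss hs.
have R0E j : (j < i.-1)%N -> (R0m2 n p i).[s`_j] = bi n p i - (Pi n p i).[s`_j].
  move=> hj; have /eqP root_j : root (Pi n p i.-1) s`_j.
    by apply: (all_nthP 0 hs); rewrite ss.
  rewrite /R0m2 /Rm2 !(hornerD, hornerN) hornerC mulrC hornerMX root_j mul0r.
  by ring.
apply: iff_trans (reindex_by_parity (fun j => (R0m2 n p i).[s`_j] < bi n p i)
                    (fun j => bi n p i < (R0m2 n p i).[s`_j]) hi) _.
rewrite /alternates ss; split=> [[H1 H2] j hj | H].
  rewrite -signr_odd mulr_sign; case: ifP => hpar.
    by have := H2 j hj hpar; rewrite R0E //; lra.
  by have := H1 j hj (negbT hpar); rewrite R0E //; lra.
split=> j hj hpar; have := H j hj; rewrite -signr_odd mulr_sign R0E //.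
  by rewrite (negbTE hpar); lra.
by rewrite hpar; lra.
Qed.

End NormalizedDerivatives.

Theorem theorem2 (R : rcfType) (n : nat) (p : {poly R}) :
  (3 <= n)%N -> size p = n.+1 -> p \is monic -> p`_n.-1 = 0 ->
  ((exists s : seq R, [/\ uniq s, size s = n & all (root p) s]) <->
   (p`_(n - 2) < 0 /\
    forall i : nat, (3 <= i <= n)%N ->
      exists s : seq R,
        [/\ sorted <%R s, size s = i.-1, all (root (Pi n p i.-1)) s
          & step_cond n p i s])).
Proof.
move=> hn sp mp p_sublead; split=> [hroots | [_ hcond]].
  split=> [|i /andP[hi3 hin]].
    have h2 : (0 < 2 <= n)%N by lia.
    have [s [_ ss s_roots s_alt]] := Pi_alternating_roots sp mp hroots h2.
    have s0 : s`_0 = 0.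
      have /(all_nthP 0)/(_ 0) := s_roots; rewrite ss (Pi_1 sp mp) //; last by lia.
      by move=> /(_ isT); rewrite rootX => /eqP.
    apply: coef_lt0_Pi2; move: (s_alt 0); rewrite ss s0 expr1 mulN1r oppr_gt0.
    by apply.
  have hi : (0 < i <= n)%N by lia.
  have [s [hs ss s_roots s_alt]] := Pi_alternating_roots sp mp hroots hi.
  by exists s; split=> //; apply/step_condE => //; lia.
have hnn : (3 <= n <= n)%N by rewrite hn leqnn.
have [s [hs ss s_roots sc]] := hcond n hnn.
have n_gt1 : (1 < n)%N by lia.
have := (step_condE n_gt1 ss s_roots).1 sc; rewrite Pi_n => p_alt.
have sp' : size p = (size s).+2 by rewrite ss sp prednK // ltnW.
have [r [sr r_roots hrs]] := alternates_roots mp sp' hs p_alt.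
exists r; split=> //; last by rewrite sr ss; lia.
exact/lt_sorted_uniq/(interlaced_sortedl sr hrs).
Qed.
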